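(* Let $\mathbf A\in\mathbb C^{n\times n}$ with $\operatorname{Ind}\mathbf A=k$ and $\operatorname{rank}\mathbf A^{k+1}=\operatorname{rank}\mathbf A^{k}=r\le n$. Then $\mathbf A^{D}\mathbf A=(p_{ij})$ satisfies, for all $i,j=1,\dots,n$, \[p_{ij}=\frac{\sum_{\beta\in J_{r,n}\{i\}}\left|\left(\mathbf A^{k+1}_{.i}(\mathbf a^{(k+1)}_{.j})\right)^{\beta}_{\beta}\right|}{\sum_{\beta\in J_{r,n}}\left|(\mathbf A^{k+1})^{\beta}_{\beta}\right|},\] where $\mathbf a^{(k+1)}_{.j}$ is the $j$-th column of $\mathbf A^{k+1}$.
   Context: $\operatorname{Ind}\mathbf A$ is the smallest nonnegative $k$ with $\operatorname{rank}\mathbf A^{k+1}=\operatorname{rank}\mathbf A^{k}$; the Drazin inverse $\mathbf A^{D}$ is the unique $\mathbf X$ with $\mathbf A^{k+1}\mathbf X=\mathbf A^{k}$, $\mathbf X\mathbf A\mathbf X=\mathbf X$, $\mathbf A\mathbf X=\mathbf X\mathbf A$. $\mathbf M_{.i}(\mathbf c)$ denotes $\mathbf M$ with its $i$-th column replaced by $\mathbf c$. $J_{r,n}$ is the set of strictly increasing sequences of $r$ elements of $\{1,\dots,n\}$, $J_{r,n}\{i\}=\{\beta\in J_{r,n}:i\in\beta\}$, $\mathbf M^{\beta}_{\beta}$ is the principal submatrix indexed by $\beta$, $|\cdot|$ is the determinant. *)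

From mathcomp Require Import all_boot all_order all_algebra.
From mathcomp Require Export complex.
Set Implicit Arguments. Unset Strict Implicit. Unset Printing Implicit Defensive.
Import GRing.Theory Num.Theory.
Local Open Scope ring_scope.

Definition is_mx_index (F : fieldType) (n : nat) (A : 'M[F]_n) (k : nat) : Prop :=
  \rank (A ^+ k.+1) = \rank (A ^+ k) /\
  (forall m, (m < k)%N -> \rank (A ^+ m.+1) <> \rank (A ^+ m)).

Definition is_drazin (F : fieldType) (n : nat) (A X : 'M[F]_n) (k : nat) : Prop :=
  A ^+ k.+1 *m X = A ^+ k /\ X *m A *m X = X /\ A *m X = X *m A.

Definition col_replace (F : fieldType) (n : nat) (M : 'M[F]_n) (i : 'I_n)
  (c : 'cV[F]_n) : 'M[F]_n :=
  \matrix_(p, q) (if q == i then c p 0 else M p q).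

Definition pminor (F : fieldType) (n : nat) (M : 'M[F]_n) (b : {set 'I_n}) : F :=
  \det (\matrix_(p < #|b|, q < #|b|)
          M (@enum_val _ (mem b) p) (@enum_val _ (mem b) q)).

From mathcomp Require Import all_boot all_order all_algebra.
From mathcomp Require Import complex.
From mathcomp Require Import fingroup perm zify ring.
Import GRing.Theory.
Set Implicit Arguments. Unset Strict Implicit. Unset Printing Implicit Defensive.
Local Open Scope ring_scope.

(* Let P := A^D A and B := A^(k+1).  Then P is idempotent, PB = BP = B and
   B + (1 - P) is invertible, so rank B = rank P = r.  The sum of the r x r
   principal minors of N is the coefficient of t^(n-r) in det(t + N), and by
   Cramer's rule the numerator sum is the same coefficient of the (i, j) entry
   of adj(t + B) B.  Factor t + B = (P + t(1 - P)) (tP + B + 1 - P): the first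
   factor has determinant t^(n-r) q(t) with q(0) != 0 and the second is
   invertible at t = 0.  This gives
   adj(t + B) B = det(t + B) P - t^(n-r+1) C(t),
   and comparing coefficients of t^(n-r) yields p_ij. *)

Section DetPrincipal.
Variable R : comNzRingType.

Lemma det_mxsub_perm n (s : 'S_n) (A : 'M[R]_n) : \det (mxsub s s A) = \det A.
Proof.
have -> : mxsub s s A = row_perm s (col_perm s A).
  by apply/matrixP => p q; rewrite !mxE.
rewrite row_permE col_permE !det_mulmx !det_perm odd_permV.
by rewrite mulrCA -signr_addb addbb expr0 mulr1.
Qed.

Lemma det_trailing_id n m (A : 'M[R]_n) (le_mn : (m <= n)%N) :
  (forall p q : 'I_n, (m <= p)%N -> A p q = (p == q)%:R) ->
  \det A = \det (mxsub (widen_ord le_mn) (widen_ord le_mn) A).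
Proof.
elim: n A m le_mn => [|n IHn] A m le_mn idA.
  have m0 : m = 0%N by apply/eqP; rewrite -leqn0.
  by subst m; rewrite !det_mx00.
have [m_eq|m_neq] := eqVneq m n.+1.
  subst m; congr (\det _); apply/matrixP => p q; rewrite !mxE.
  by congr (A _ _); apply/val_inj.
have le_mn' : (m <= n)%N by rewrite -ltnS ltn_neqAle m_neq le_mn.
rewrite (expand_det_row _ ord_max) (bigD1 ord_max) //= big1 ?addr0; last first.
  by move=> j nj; rewrite idA ?leq_ord // eq_sym (negbTE nj) mul0r.
rewrite idA // eqxx mul1r /cofactor addnn -signr_odd odd_double expr0 mul1r.
rewrite (IHn _ m le_mn'); last first.
  move=> p q le_mp; rewrite !mxE idA ?lift_max //.
  by rewrite (inj_eq (@lift_inj _ ord_max)).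
congr (\det _); apply/matrixP => p q; rewrite !mxE.
by congr (A _ _); apply/val_inj; exact: lift_max.
Qed.

Definition principal_ext n (N : 'M[R]_n) (S : {set 'I_n}) : 'M[R]_n :=
  \matrix_(p, q) if (p \in S) && (q \in S) then N p q else (p == q)%:R.

Lemma det_add_diag n (N : 'M[R]_n) (d : 'rV[R]_n) :
  \det (N + diag_mx d) =
  \sum_(S : {set 'I_n}) (\prod_(l in ~: S) d 0 l) * \det (principal_ext N S).
Proof.
rewrite /determinant.
transitivity (\sum_(s : 'S_n) \sum_(S : {set 'I_n}) (-1) ^+ s *
   \prod_i (if i \in S then N i (s i) else d 0 i *+ (i == s i))).
  apply: eq_bigr => s _; rewrite -mulr_sumr; congr (_ * _).
  rewrite (eq_bigr (fun i => N i (s i) + d 0 i *+ (i == s i))) ?bigA_distr //.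
  by move=> i _; rewrite !mxE.
rewrite exchange_big; apply: eq_bigr => S _.
rewrite mulr_sumr; apply: eq_bigr => s _; rewrite mulrCA; congr (_ * _).
have [fixS|] := boolP [forall i, (i \notin S) ==> (s i == i)]; last first.
  rewrite negb_forall => /existsP [i0]; rewrite negb_imply => /andP [i0S si0].
  rewrite (bigD1 i0) //= [X in _ = _ * X](bigD1 i0) //= !mxE (negbTE i0S) /=.
  by rewrite eq_sym (negbTE si0) !mul0r mulr0.
have sfix i : i \notin S -> s i = i.
  by move=> iS; exact/eqP/(implyP (forallP fixS i)).
have sS i : i \in S -> s i \in S.
  move=> iS; apply/negPn/negP => siS; have := sfix _ siS.
  by move/perm_inj => si; move: siS; rewrite si iS.
rewrite (bigID (mem S)) [X in _ = _ * X](bigID (mem S)) /=.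
rewrite [X in _ = _ * (_ * X)]big1 => [|i iS]; last first.
  by rewrite mxE (negbTE iS) sfix ?eqxx.
rewrite mulr1 mulrC; congr (_ * _); first last.
  by apply: eq_bigr => i iS; rewrite mxE iS sS.
rewrite [RHS](eq_bigl (fun i => i \notin S)) => [|i]; last by rewrite inE.
by apply: eq_bigr => i iS; rewrite (negbTE iS) sfix ?eqxx.
Qed.

Lemma det_principal_extZ n (a : R) (N : 'M[R]_n) S :
  \det (principal_ext (a *: N) S) = a ^+ #|S| * \det (principal_ext N S).
Proof.
have -> : principal_ext (a *: N) S =
    diag_mx (\row_l (if l \in S then a else 1)) *m principal_ext N S.
  rewrite mul_diag_mx; apply/matrixP => p q; rewrite !mxE.
  case: (boolP (p \in S)) => pS; case: (boolP (q \in S)) => qS //=;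
    rewrite ?mul1r //.
  by case: eqP qS => [<-|]; rewrite ?mulr0 // pS.
rewrite det_mulmx det_diag (eq_bigr (fun l => if l \in S then a else 1)).
  by rewrite -big_mkcond prodr_const.
by move=> l _; rewrite mxE.
Qed.
End DetPrincipal.

Section SetFirstPerm.
Variables (n : nat) (S : {set 'I_n}).

Let s := enum S ++ enum (~: S).

Let size_s : size s = n.
Proof. by rewrite size_cat -!cardE cardsC card_ord. Qed.

Let nth_s_inj : injective (fun p : 'I_n => nth p s p).
Proof.
move=> p q; rewrite /= (set_nth_default p q) ?size_s //.
move/eqP; rewrite nth_uniq ?size_s //; last first.
  rewrite cat_uniq !enum_uniq andbT /=; apply/hasPn => x.
  by rewrite !mem_enum inE => /negPf ->.
by move/eqP; exact: val_inj.
Qed.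

Definition set_first_perm : 'S_n := perm nth_s_inj.

Lemma set_first_perm_lt (le_Sn : (#|S| <= n)%N) (p : 'I_#|S|) :
  set_first_perm (widen_ord le_Sn p) = enum_val p.
Proof.
rewrite permE /= nth_cat -cardE ltn_ord /enum_val.
by apply: set_nth_default; rewrite -cardE.
Qed.

Lemma set_first_perm_ge (p : 'I_n) : (#|S| <= p)%N -> set_first_perm p \notin S.
Proof.
move=> le_Sp; rewrite permE /= nth_cat -cardE ltnNge le_Sp /=.
suff : nth p (enum (~: S)) (p - #|S|) \in enum (~: S) by rewrite mem_enum inE.
apply: mem_nth; rewrite -cardE -(ltn_add2l #|S|) subnKC // cardsC card_ord.
exact: ltn_ord.
Qed.
End SetFirstPerm.

Lemma pminor_principal_ext (F : fieldType) n (N : 'M[F]_n) (S : {set 'I_n}) :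
  pminor N S = \det (principal_ext N S).
Proof.
have le_Sn : (#|S| <= n)%N by rewrite -[X in (_ <= X)%N](card_ord n) max_card.
rewrite -(det_mxsub_perm (set_first_perm S)) (det_trailing_id le_Sn); last first.
  move=> p q le_Sp; rewrite !mxE (negbTE (set_first_perm_ge le_Sp)) /=.
  by rewrite (inj_eq perm_inj).
congr (\det _); apply/matrixP => p q; rewrite !mxE !set_first_perm_lt.
by rewrite !enum_valP.
Qed.

Lemma pminor_eq0_rank_lt (F : fieldType) n (N : 'M[F]_n) (S : {set 'I_n}) :
  (\rank N < #|S|)%N -> pminor N S = 0.
Proof.
move=> lt_rS; rewrite /pminor; set f := @enum_val _ (mem S).
have -> : \matrix_(p, q) N (f p) (f q) = rowsub f N *m colsub f 1%:M.
  by rewrite -mxsub_mul mulmx1; apply/matrixP => p q; rewrite !mxE.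
apply/eqP; apply: contraTT lt_rS; rewrite -unitfE -unitmxE => /mxrank_unit <-.
by rewrite -leqNgt (leq_trans (mxrankM_maxl _ _)) // rowsubE mxrankM_maxr.
Qed.

Lemma det_replace_col (R : comNzRingType) n (M : 'M[R]_n) i (c : 'cV_n) :
  \det (\matrix_(p, q) if q == i then c p 0 else M p q) = (\adj M *m c) i 0.
Proof.
rewrite (expand_det_col _ i) !mxE; apply: eq_bigr => l _.
rewrite !mxE eqxx mulrC; congr (_ * _).
rewrite /cofactor; congr (_ * \det _); apply/matrixP => p q; rewrite !mxE.
by rewrite eq_sym (negbTE (neq_lift _ _)).
Qed.

Section PminorCoef.
Variables (F : fieldType) (n : nat).

Lemma det_principal_ext_polyC (N : 'M[F]_n) (S : {set 'I_n}) :
  \det (principal_ext (map_mx polyC N) S) = (pminor N S)%:P.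
Proof.
rewrite pminor_principal_ext -det_map_mx; congr (\det _); apply/matrixP => p q.
by rewrite !mxE; case: ifP => // _; rewrite rmorph_nat.
Qed.

Lemma coef_sum_pminor r (N : 'M[F]_n) (P : pred {set 'I_n}) : (r <= n)%N ->
  (\sum_(S : {set 'I_n})
      ((if P S then 'X ^+ #|~: S| else 0) * (pminor N S)%:P))`_(n - r) =
  \sum_(S : {set 'I_n} | (#|S| == r) && P S) pminor N S.
Proof.
move=> le_rn; rewrite coef_sum [RHS]big_mkcond; apply: eq_bigr => S _.
case: (P S); last by rewrite mul0r coef0 andbF.
rewrite mulrC coefCM coefXn andbT.
have -> : ((n - r)%N == #|~: S|) = (#|S| == r).
  by have := cardsC S; rewrite card_ord => hc; apply/eqP/eqP; lia.
by case: (_ == _); rewrite ?mulr1 ?mulr0.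
Qed.

Lemma sum_pminor_coef_det r (N : 'M[F]_n) : (r <= n)%N ->
  \sum_(S : {set 'I_n} | #|S| == r) pminor N S =
  (\det ('X%:M + map_mx polyC N))`_(n - r).
Proof.
move=> le_rn.
transitivity (\sum_(S : {set 'I_n} | (#|S| == r) && predT S) pminor N S).
  by apply: eq_bigl => S; rewrite andbT.
rewrite -(coef_sum_pminor N predT le_rn) addrC -diag_const_mx det_add_diag.
apply: (congr1 (fun p : {poly F} => p`_(n - r))); apply: eq_bigr => S _.
rewrite det_principal_ext_polyC (eq_bigr (fun=> 'X)) ?prodr_const // => l _.
by rewrite mxE.
Qed.

Lemma sum_pminor_col_replace r (N : 'M[F]_n) i j : (r <= n)%N ->
  \sum_(S : {set 'I_n} | (#|S| == r) && (i \in S))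
    pminor (col_replace N i (col j N)) S =
  ((\adj ('X%:M + map_mx polyC N) *m map_mx polyC N) i j)`_(n - r).
Proof.
move=> le_rn; set C := col_replace N i (col j N); set Np := map_mx polyC N.
have -> : (\adj ('X%:M + Np) *m Np) i j = (\adj ('X%:M + Np) *m col j Np) i 0.
  by rewrite !mxE; apply: eq_bigr => l _; rewrite !mxE.
rewrite -det_replace_col.
set d := \row_l (if l == i then 0 else 'X : {poly F}).
have -> : \matrix_(p, q) (if q == i then col j Np p 0 else ('X%:M + Np) p q) =
    map_mx polyC C + diag_mx d.
  apply/matrixP => p q; rewrite !mxE.
  have [->|qi] := eqVneq q i; first by case: (p == i); rewrite ?mulr0n addr0.
  by rewrite addrC; case: eqP => [->|_]; rewrite ?(negbTE qi) ?mulr0n.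
have /= <- := coef_sum_pminor C (fun S => i \in S) le_rn; rewrite det_add_diag.
apply: (congr1 (fun p : {poly F} => p`_(n - r))); apply: eq_bigr => S _.
rewrite det_principal_ext_polyC; congr (_ * _).
have [iS|iNS] := boolP (i \in S); last first.
  by rewrite (bigD1 i) ?inE //= mxE eqxx mul0r.
rewrite -prodr_const; apply: eq_bigr => l; rewrite inE mxE.
by case: eqP => [->|]; rewrite ?iS.
Qed.
End PminorCoef.

Lemma adj_mulmx_mul_left (R : idomainType) n (V W : 'M[R]_n) :
  \det W != 0 -> \adj (V *m W) *m V = \det V *: \adj W.
Proof.
move=> detW_neq0; set D := \adj (V *m W) *m V - \det V *: \adj W.
have DW0 : D *m W = 0.
  rewrite mulmxBl -mulmxA -scalemxAl !mul_adj_mx det_mulmx.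
  by rewrite scale_scalar_mx subrr.
have : \det W *: D = 0.
  by rewrite -mul_mx_scalar -(mul_mx_adj W) mulmxA DW0 mul0mx.
by move/eqP; rewrite scalemx_eq0 (negbTE detW_neq0) /= subr_eq0 => /eqP.
Qed.

Lemma det_pencil_dvdX (F : fieldType) n (N : 'M[F]_n) :
  exists q, \det ((1 - 'X) *: map_mx polyC N + 'X%:M) = 'X^(n - \rank N) * q.
Proof.
have le_rn : (\rank N <= n)%N by apply: rank_leq_row.
exists (\sum_(S : {set 'I_n}) if (#|S| <= \rank N)%N then
   'X^(\rank N - #|S|) * ((1 - 'X) ^+ #|S| * (pminor N S)%:P) else 0).
rewrite -diag_const_mx det_add_diag mulr_sumr; apply: eq_bigr => S _.
rewrite (eq_bigr (fun=> 'X)) => [|l _]; last by rewrite mxE.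
rewrite prodr_const det_principal_extZ det_principal_ext_polyC.
have := cardsC S; rewrite card_ord => cardSC.
case: leqP => [le_Sr|lt_rS]; last first.
  by rewrite pminor_eq0_rank_lt // polyC0 !mulr0.
by rewrite [RHS]mulrA -exprD; congr (_ ^+ _ * _); lia.
Qed.

Section IdempotentAlgebra.
Variables (K : comNzRingType) (A : algType K) (Q B : A).
Hypothesis QQ : Q * Q = Q.

Lemma idem_complQ : (1 - Q) * Q = 0.
Proof. by rewrite mulrBl mul1r QQ subrr. Qed.

Lemma idem_Qcompl : Q * (1 - Q) = 0.
Proof. by rewrite mulrBr mulr1 QQ subrr. Qed.

Lemma idem_compl : (1 - Q) * (1 - Q) = 1 - Q.
Proof. by rewrite mulrBr mulr1 idem_complQ subr0. Qed.

Lemma pencil_mul_compl (x : K) : (Q + x *: (1 - Q)) * ((1 - Q) + x *: Q) = x%:A.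
Proof.
rewrite mulrDl -scalerAl (mulrDr Q (1 - Q)) (mulrDr (1 - Q) (1 - Q)) -!scalerAr.
rewrite QQ idem_Qcompl idem_complQ idem_compl.
by rewrite !scaler0 addr0 add0r -scalerDr [Q + _]addrC subrK.
Qed.

Lemma pencil_mul_idem (x : K) : (Q + x *: (1 - Q)) * Q = Q.
Proof. by rewrite mulrDl -scalerAl QQ idem_complQ scaler0 addr0. Qed.

Hypotheses (QB : Q * B = B) (BQ : B * Q = B).

Lemma pencil_factor (x : K) :
  (Q + x *: (1 - Q)) * (x *: Q + B + (1 - Q)) = x%:A + B.
Proof.
have complB : (1 - Q) * B = 0 by rewrite mulrBl mul1r QB subrr.
rewrite mulrDl -scalerAl (mulrDr Q (x *: Q + B)) (mulrDr Q (x *: Q)).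
rewrite (mulrDr (1 - Q) (x *: Q + B)) (mulrDr (1 - Q) (x *: Q)) -!scalerAr.
rewrite QQ QB idem_Qcompl idem_complQ complB idem_compl.
rewrite scaler0 !addr0 add0r -addrA [B + _]addrC addrA -scalerDr.
by rewrite [Q + _]addrC subrK.
Qed.

Lemma add_idem_compl_mulr_inv (Y : A) : B * Y = Q -> Y * Q = Q * Y ->
  (B + (1 - Q)) * (Y * Q + (1 - Q)) = 1.
Proof.
move=> BY YQ.
have BC : B * (1 - Q) = 0 by rewrite mulrBr mulr1 BQ subrr.
have CYQ : (1 - Q) * (Y * Q) = 0.
  by rewrite mulrBl mul1r mulrA -YQ -mulrA QQ subrr.
rewrite mulrDl (mulrDr B) (mulrDr (1 - Q)) mulrA BY QQ BC CYQ idem_compl.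
by rewrite addr0 add0r [Q + _]addrC subrK.
Qed.
End IdempotentAlgebra.

Section IdempotentPencil.
Variables (F : fieldType) (n : nat) (P B : 'M[F]_n.+1).
Hypotheses (PP : P * P = P) (PB : P * B = B) (BP : B * P = B).

Local Notation Pp := (map_mx polyC P).
Local Notation Bp := (map_mx polyC B).
Local Notation V := (Pp + 'X *: (1 - Pp)).
Local Notation W := ('X *: Pp + Bp + (1 - Pp)).
Local Notation M := ('X%:M + Bp).

Let PPp : Pp * Pp = Pp. Proof. by rewrite -rmorphM PP. Qed.

Lemma rank_idem_compl : (\rank (1 - P)%R <= n.+1 - \rank P)%N.
Proof.
have : (P <= kermx (1 - P))%MS by apply/sub_kermxP; rewrite mulmxE idem_Qcompl.
by move/mxrankS; rewrite mxrank_ker; have := rank_leq_row (1 - P); lia.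
Qed.

Lemma det_idem_pencil :
  exists2 q, \det V = 'X^(n.+1 - \rank P) * q & q`_0 != 0.
Proof.
have pencilE (N : 'M[F]_n.+1) : map_mx polyC N + 'X *: (1 - map_mx polyC N) =
    (1 - 'X) *: map_mx polyC N + 'X%:M.
  by rewrite scalerBr scalerBl scale1r -scalemx1 addrA addrAC.
have [q1 detV] := det_pencil_dvdX P; rewrite -pencilE in detV.
have [q2 detVc] := det_pencil_dvdX (1 - P).
rewrite -pencilE rmorphB rmorph1 subKr in detVc.
exists q1 => //.
(* det V * det (1 - Pp + 'X *: Pp) = 'X^(n+1), and the second factor is
   divisible by 'X^r since rank (1 - P) <= n + 1 - r: so q1`_0 != 0. *)
have := congr1 determinant (pencil_mul_compl PPp 'X).
rewrite detM detVc detV detZ det1 mulr1 => detVVc.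
set r := \rank P in detV detVVc *.
set e := (n.+1 - \rank (1 - P)%R)%N in detVVc.
have le_re : (r <= e)%N.
  by have := rank_idem_compl; have := rank_leq_row P; rewrite /e /r; lia.
have : 'X^(n.+1) * (q1 * ('X^(e - r) * q2)) = 'X^(n.+1) * 1.
  have Xe : 'X^e = 'X^r * 'X^(e - r) :> {poly F} by rewrite -exprD subnKC.
  have Xn : 'X^(n.+1) = 'X^(n.+1 - r) * 'X^r :> {poly F}.
    by rewrite -exprD subnK ?rank_leq_row.
  by rewrite mulr1 -[in RHS]detVVc Xe Xn; ring.
move/mulfI => /(_ (expf_neq0 _ (negbT (polyX_eq0 _)))) /(congr1 (coefp 0)) /=.
rewrite coef0M coef1 => /eqP; apply: contraTneq => ->.
by rewrite mul0r eq_sym oner_eq0.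
Qed.

Hypothesis BPu : B + (1 - P) \in unitmx.

Let PBp : Pp * Bp = Bp. Proof. by rewrite -rmorphM PB. Qed.
Let BPp : Bp * Pp = Bp. Proof. by rewrite -rmorphM BP. Qed.

Lemma mxrank_eq_idem : \rank B = \rank P.
Proof.
have -> : B = P *m (B + (1 - P)) by rewrite mulmxE mulrDr PB idem_Qcompl ?addr0.
by rewrite mxrankMfree ?row_free_unit.
Qed.

Lemma pencil_factor_mx : V * W = M.
Proof. by rewrite pencil_factor // scalemx1. Qed.

Lemma coef0_det_pencil_factor_neq0 : (\det W)`_0 != 0.
Proof.
rewrite -horner_coef0 -[_.[0]]/(horner_eval 0 _) -det_map_mx -unitfE -unitmxE.
suff -> : map_mx (horner_eval 0) W = B + (1 - P) by [].
apply/matrixP => p q; rewrite !mxE /horner_eval.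
by rewrite !(hornerE, hornerMn) /= -addrA.
Qed.

Lemma adj_pencil_mul :
  \adj M * Bp = \det M *: Pp - 'X *: (\det V *: (\adj W * Pp)).
Proof.
have BpE : Bp = M * Pp - 'X *: Pp.
  by rewrite mulrDl BPp -scalemx1 -scalerAl mul1r [_ + Bp]addrC addrK.
have adjMV : \adj M * V = \det V *: \adj W.
  rewrite -pencil_factor_mx -!mulmxE adj_mulmx_mul_left //.
  by apply: contraNneq coef0_det_pencil_factor_neq0 => ->; rewrite coef0.
rewrite [X in _ * X = _]BpE mulrBr mulrA -mulmxE mul_adj_mx mul_scalar_mx.
have VPp : V * Pp = Pp := pencil_mul_idem PPp 'X.
congr (_ - _); rewrite -scalemxAr -[in LHS]VPp mulmxE mulrA.
by rewrite adjMV -scalerAl.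
Qed.

Lemma coef_det_pencil_neq0 : (\det M)`_(n.+1 - \rank P) != 0.
Proof.
have [q detV q0_neq0] := det_idem_pencil.
rewrite -pencil_factor_mx detM detV -mulrA coefXnM ltnn subnn coef0M.
by rewrite mulf_neq0 ?coef0_det_pencil_factor_neq0.
Qed.

Lemma coef_adj_pencil_mul i j :
  ((\adj M * Bp) i j)`_(n.+1 - \rank P) = (\det M)`_(n.+1 - \rank P) * P i j.
Proof.
have [q detV _] := det_idem_pencil.
rewrite adj_pencil_mul !mxE coefB coefMC detV.
by rewrite !mulrA -exprS -!mulrA coefXnM ltnSn subr0.
Qed.

Theorem idem_entry_pminor_ratio i j :
  P i j = (\sum_(S : {set 'I_n.+1} | (#|S| == \rank B) && (i \in S))
              pminor (col_replace B i (col j B)) S)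
          / (\sum_(S : {set 'I_n.+1} | #|S| == \rank B) pminor B S).
Proof.
have le_rn := rank_leq_row B.
rewrite sum_pminor_col_replace // sum_pminor_coef_det // mxrank_eq_idem mulmxE.
by rewrite coef_adj_pencil_mul [_ * P i j]mulrC mulfK ?coef_det_pencil_neq0.
Qed.
End IdempotentPencil.

Lemma exprS_mul_exprS_outer_inv (R : pzRingType) (a x : R) m :
  a * x = x * a -> x * a * x = x -> a ^+ m.+1 * x ^+ m.+1 = x * a.
Proof.
move=> ax xax; elim: m => [|m IHm]; first by rewrite !expr1 ax.
rewrite (exprS a m.+1) (exprSr x m.+1) mulrA -(mulrA a) IHm !mulrA ax.
by rewrite -(mulrA _ a x) ax mulrA xax.
Qed.

Section DrazinProjector.
Variables (F : fieldType) (n k : nat) (A X : 'M[F]_n.+1).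
Hypothesis drazinAX : is_drazin A X k.

Let AkX : A ^+ k.+1 * X = A ^+ k. Proof. by case: drazinAX. Qed.
Let XAX : X * A * X = X. Proof. by case: drazinAX => _ []. Qed.
Let AX : A * X = X * A. Proof. by case: drazinAX => _ []. Qed.

Lemma drazin_idem : X * A * (X * A) = X * A.
Proof. by rewrite mulrA XAX. Qed.

Lemma drazin_exp_idem : A ^+ k.+1 * (X * A) = A ^+ k.+1.
Proof. by rewrite mulrA AkX -exprSr. Qed.

Lemma drazin_idem_exp : X * A * A ^+ k.+1 = A ^+ k.+1.
Proof.
have XAk : GRing.comm X (A ^+ k.+1) by apply/commrX.
by rewrite -mulrA -exprS exprSr mulrA XAk AkX -exprSr.
Qed.

Lemma drazin_exp_mul_expX : A ^+ k.+1 * X ^+ k.+1 = X * A.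
Proof. exact: exprS_mul_exprS_outer_inv. Qed.

Lemma drazin_exp_add_compl_unit : A ^+ k.+1 + (1 - X * A) \in unitmx.
Proof.
have XkP : X ^+ k.+1 * (X * A) = X * A * X ^+ k.+1.
  by apply/commr_sym/commrX; rewrite /GRing.comm XAX -AX mulrA XAX.
have := add_idem_compl_mulr_inv drazin_idem drazin_exp_idem
  drazin_exp_mul_expX XkP.
by rewrite -mulmxE => /mulmx1_unit [].
Qed.
End DrazinProjector.

Theorem corollary2p6 (R : rcfType) (n k r : nat) (A X : 'M[R[i]]_n) :
  is_mx_index A k ->
  \rank (A ^+ k.+1) = r -> \rank (A ^+ k) = r -> (r <= n)%N ->
  is_drazin A X k ->
  forall i j : 'I_n,
    (X *m A) i j =
      (\sum_(b : {set 'I_n} | (#|b| == r) && (i \in b))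
          pminor (col_replace (A ^+ k.+1) i (col j (A ^+ k.+1))) b)
      / (\sum_(b : {set 'I_n} | #|b| == r) pminor (A ^+ k.+1) b).
Proof.
move=> _ <- _ _; case: n A X => [|n] A X drazinAX i j; first by case: i.
apply: idem_entry_pminor_ratio.
- exact: drazin_idem drazinAX.
- exact: drazin_idem_exp drazinAX.
- exact: drazin_exp_idem drazinAX.
- exact: drazin_exp_add_compl_unit drazinAX.
Qed.
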